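(* Let $A,B\subseteq\Sigma^+$, $A'\subseteq A$ and $B'\subseteq B$. If $\langle A,B\rangle$ has a deduction tree of size $k$, then $\langle A',B'\rangle$ has a deduction tree of size $k$.
   Context: Let $AP$ be a finite set of atomic propositions and $\Sigma=2^{AP}$. For $\sigma=w_0\cdots w_m\in\Sigma^+$ and $j\le m$, $\sigma^{(j)}=w_j\cdots w_m$. For $A\subseteq\Sigma^+$: $A^{\mathsf X}=\{\sigma^{(1)}:\sigma\in A,|\sigma|\ge2\}$; $A^{\mathsf G}=\{\sigma^{(j)}:\sigma\in A,0\le j<|\sigma|\}$; a future point for $A$ is $f:A\to\mathbb N$ with $f(\sigma)<|\sigma|$ for all $\sigma$, and $A^f=\{\sigma^{(f(\sigma))}:\sigma\in A\}$. For a literal $\alpha\in\{p,\neg p: p\in AP\}$, $A\models\alpha$ means $\alpha$ holds at position $0$ of every trace in $A$ and $B\perp\alpha$ means it fails at position $0$ of every trace in $B$. Proof system on terms $\langle A,B\rangle$ ($A,B\subseteq\Sigma^+$): Atomic: $\langle A,B\rangle$ if $A\models\alpha$ and $B\perp\alpha$ for some literal $\alpha$; Or: $\langle A_1\uplus A_2,B\rangle$ from $\langle A_1,B\rangle,\langle A_2,B\rangle$; And: $\langle A,B_1\uplus B_2\rangle$ from $\langle A,B_1\rangle,\langle A,B_2\rangle$; Next: $\langle A,B\rangle$ from $\langle A^{\mathsf X},B^{\mathsf X}\rangle$ if $|A^{\mathsf X}|=|A|$; WeakNext: $\langle A,B\rangle$ from $\langle A^{\mathsf X},B^{\mathsf X}\rangle$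 if $|B^{\mathsf X}|=|B|$; Future: $\langle A,B\rangle$ from $\langle A^f,B^{\mathsf G}\rangle$ for a future point $f$ for $A$; Globally: $\langle A,B\rangle$ from $\langle A^{\mathsf G},B^f\rangle$ for a future point $f$ for $B$ ($\uplus$ = disjoint union). A deduction tree for $\langle A,B\rangle$ is a finite tree of rule applications with root conclusion $\langle A,B\rangle$ in which every hypothesis is derived by a rule application; its size is its number of rule applications. *)

From HB Require Import structures.
From mathcomp Require Import all_boot.
From mathcomp Require Import finmap.
Set Implicit Arguments. Unset Strict Implicit. Unset Printing Implicit Defensive.
Local Open Scope fset_scope.

(* Letters: subsets of the finite set AP of atomic propositions, Sigma = 2^AP.
   A (nonempty) trace w_0 w_1 ... w_m is represented as the pair (w_0, [w_1;...;w_m]). *)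
Section Traces.
Variable AP : finType.
Definition letter := {set AP}.
Definition trace := (letter * seq letter)%type.

Definition tword (s : trace) : seq letter := s.1 :: s.2.
Definition tlen (s : trace) : nat := size (tword s).
(* sigma^(j) = w_j ... w_m  (meaningful for j < |sigma|) *)
Definition suffix (j : nat) (s : trace) : trace :=
  (nth s.1 (tword s) j, drop j.+1 (tword s)).

Definition setX (A : {fset trace}) : {fset trace} :=
  [fset suffix 1 s | s in A & 2 <= tlen s].
Definition setG (A : {fset trace}) : {fset trace} :=
  \bigcup_(s <- A) [fset suffix j s | j in iota 0 (tlen s)].
Definition future_point (A : {fset trace}) (f : trace -> nat) : Prop :=
  forall s, s \in A -> f s < tlen s.
Definition setF (A : {fset trace}) (f : trace -> nat) : {fset trace} :=
  [fset suffix (f s) s | s in A].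

(* literals: (p, true) is p, (p, false) is ~p *)
Definition literal := (AP * bool)%type.
Definition lit_holds (a : literal) (w : letter) : bool := (a.1 \in w) == a.2.
Definition models (A : {fset trace}) (a : literal) : Prop :=
  forall s, s \in A -> lit_holds a s.1.
Definition perp (B : {fset trace}) (a : literal) : Prop :=
  forall s, s \in B -> ~~ lit_holds a s.1.

(* deriv A B k : <A,B> has a deduction tree with k rule applications *)
Inductive deriv : {fset trace} -> {fset trace} -> nat -> Prop :=
| D_atomic A B (a : literal) :
    models A a -> perp B a -> deriv A B 1
| D_or A1 A2 B k1 k2 :
    [disjoint A1 & A2] -> deriv A1 B k1 -> deriv A2 B k2 ->
    deriv (A1 `|` A2) B (k1 + k2).+1
| D_and A B1 B2 k1 k2 :
    [disjoint B1 & B2] -> deriv A B1 k1 -> deriv A B2 k2 ->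
    deriv A (B1 `|` B2) (k1 + k2).+1
| D_next A B k :
    #|` setX A| = #|` A| -> deriv (setX A) (setX B) k -> deriv A B k.+1
| D_weaknext A B k :
    #|` setX B| = #|` B| -> deriv (setX A) (setX B) k -> deriv A B k.+1
| D_future A B (f : trace -> nat) k :
    future_point A f -> deriv (setF A f) (setG B) k -> deriv A B k.+1
| D_globally A B (f : trace -> nat) k :
    future_point B f -> deriv (setG A) (setF B f) k -> deriv A B k.+1.
End Traces.

(* Every premise of a rule survives shrinking the two sides: literal
   conditions are universal, the operators A^X, A^G, A^f are monotone, a
   future point restricts to subsets, and a disjoint decomposition of a
   superset induces one of the subset by intersection.  The only premise that
   is not monotone, |A^X| = |A|, is inherited too, since it says that
   sigma |-> sigma^(1) is defined and injective on all of A.  So the same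
   deduction tree, rule by rule, works for the smaller sets. *)

From Pilot Require Import Defs.
From mathcomp Require Import all_boot finmap zify.
(* re-imported so that [setX] is the operator A^X and not finset's product *)
Import Defs.
Set Implicit Arguments.
Unset Strict Implicit.
Unset Printing Implicit Defensive.
Local Open Scope fset_scope.

Section ConditionalImage.
Variables (T U : choiceType) (f : T -> U) (P : pred T).
Implicit Types A : {fset T}.

Lemma card_imfset_cond_le A : #|` [fset f x | x in A & P x]| <= #|` A|.
Proof.
apply: leq_trans (leq_imfset_card _ _ _) _.
by rewrite /enum_finmem /= size_filter count_size.
Qed.

Lemma imfset_cond_fsubU A A' :
  [fset f x | x in A & P x] `<=`
  [fset f x | x in A' & P x] `|` [fset f x | x in A `\` A' & P x].
Proof.
apply/fsubsetP => _ /imfsetP [x /= /andP [xA Px] ->].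
apply/fsetUP; case xA': (x \in A'); [left | right];
  by rewrite in_imfset //= ?inE xA' ?xA Px.
Qed.

(* The image can only have full size on A if it has full size on each part
   of the partition A = A' + (A \ A'). *)
Lemma card_imfset_cond_fsub A A' : A' `<=` A ->
  #|` [fset f x | x in A & P x]| = #|` A| ->
  #|` [fset f x | x in A' & P x]| = #|` A'|.
Proof.
move=> sA'A full.
have le_U := fsubset_leq_card (imfset_cond_fsubU A A').
have [le_add _] := leq_card_fsetU [fset f x | x in A' & P x]
                                  [fset f x | x in A `\` A' & P x].
have le_A' := card_imfset_cond_le A'.
have le_D := card_imfset_cond_le (A `\` A').
have le_A := fsubset_leq_card sA'A.
rewrite cardfsDS // in le_D; lia.
Qed.

End ConditionalImage.

Section FsetDecomposition.
Variable K : choiceType.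
Implicit Types A : {fset K}.

Lemma fsubsetU_fsetIU A1 A2 A : A `<=` A1 `|` A2 -> A = A `&` A1 `|` A `&` A2.
Proof. by move=> sA; rewrite -fsetIUr; apply/esym/fsetIidPl. Qed.

Lemma fdisjointI2 A1 A2 A :
  [disjoint A1 & A2] -> [disjoint A `&` A1 & A `&` A2].
Proof.
by move=> dis; apply: fdisjointWl (fsubsetIr _ _) (fdisjointWr (fsubsetIr _ _) dis).
Qed.

End FsetDecomposition.

Section Monotonicity.
Variable AP : finType.
Implicit Types A B : {fset trace AP}.

Lemma models_subset A A' a : A' `<=` A -> models A a -> models A' a.
Proof. by move=> sA mA s /(fsubsetP sA); apply: mA. Qed.

Lemma perp_subset B B' a : B' `<=` B -> perp B a -> perp B' a.
Proof. by move=> sB pB s /(fsubsetP sB); apply: pB. Qed.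

Lemma future_point_subset A A' f :
  A' `<=` A -> future_point A f -> future_point A' f.
Proof. by move=> sA fp s /(fsubsetP sA); apply: fp. Qed.

Lemma setX_subset A A' : A' `<=` A -> setX A' `<=` setX A.
Proof.
by move=> sA; apply: subset_imfset => s; rewrite !inE => /andP [/(fsubsetP sA) -> ->].
Qed.

Lemma setF_subset A A' f : A' `<=` A -> setF A' f `<=` setF A f.
Proof. by move=> sA; apply: subset_imfset => s /=; apply: (fsubsetP sA). Qed.

Lemma setG_subset A A' : A' `<=` A -> setG A' `<=` setG A.
Proof.
move=> sA; apply/fsubsetP => x /bigfcupP [s /andP [/(fsubsetP sA) sA' _] xs].
by apply/bigfcupP; exists s; rewrite ?sA'.
Qed.

Lemma card_setX_subset A A' : A' `<=` A ->
  #|` setX A| = #|` A| -> #|` setX A'| = #|` A'|.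
Proof. exact: card_imfset_cond_fsub. Qed.

End Monotonicity.

Theorem lemma10 (AP : finType) (A B A' B' : {fset trace AP}) (k : nat) :
  A' `<=` A -> B' `<=` B -> deriv A B k -> deriv A' B' k.
Proof.
move=> sA sB D; elim: D A' B' sA sB => {A B k}
  [A B a mA pB | A1 A2 B k1 k2 dis _ IH1 _ IH2 | A B1 B2 k1 k2 dis _ IH1 _ IH2
  | A B k full _ IH | A B k full _ IH | A B f k fp _ IH | A B f k fp _ IH]
  A' B' sA sB.
- exact: D_atomic (models_subset sA mA) (perp_subset sB pB).
- rewrite (fsubsetU_fsetIU sA); apply: D_or (fdisjointI2 _ dis) _ _.
  + exact: IH1 (fsubsetIr _ _) sB.
  + exact: IH2 (fsubsetIr _ _) sB.
- rewrite (fsubsetU_fsetIU sB); apply: D_and (fdisjointI2 _ dis) _ _.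
  + exact: IH1 sA (fsubsetIr _ _).
  + exact: IH2 sA (fsubsetIr _ _).
- exact: D_next (card_setX_subset sA full)
    (IH _ _ (setX_subset sA) (setX_subset sB)).
- exact: D_weaknext (card_setX_subset sB full)
    (IH _ _ (setX_subset sA) (setX_subset sB)).
- exact: D_future (future_point_subset sA fp)
    (IH _ _ (setF_subset f sA) (setG_subset sB)).
- exact: D_globally (future_point_subset sB fp)
    (IH _ _ (setG_subset sA) (setF_subset f sB)).
Qed.
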